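(* There exists an infinite family of digraphs $\{X_j\}_{j=1}^{\infty}$ such that the diameter of $\Gamma(X_j)$ tends to $\infty$ as $j\to\infty$, while each $H(X_j)$ has exactly three distinct eigenvalues.
   Context: A digraph $X$ has a finite vertex set and an arc set of ordered pairs of distinct vertices. The underlying graph $\Gamma(X)$ is the simple graph with an edge $\{x,y\}$ whenever $xy$ or $yx$ is an arc. The Hermitian adjacency matrix $H(X)$ has $(u,v)$-entry $1$ if $uv$ and $vu$ are arcs, $i$ if only $uv$ is an arc, $-i$ if only $vu$ is an arc, and $0$ otherwise. *)

From HB Require Import structures.
From mathcomp Require Import all_boot all_order all_algebra.
From mathcomp Require Import algC.
Set Implicit Arguments. Unset Strict Implicit. Unset Printing Implicit Defensive.
Import Order.TTheory GRing.Theory Num.Theory.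

Record digraph := Digraph {
  dnv : nat;
  darc : rel 'I_dnv;
  darc_irr : irreflexive darc }.

Definition und_adj (X : digraph) : rel 'I_(dnv X) :=
  fun x y => @darc X x y || @darc X y x.

Definition hermAdj (X : digraph) : 'M[algC]_(dnv X) :=
  \matrix_(u, v)
    (if @darc X u v && @darc X v u then 1
     else if @darc X u v then 'i
     else if @darc X v u then - 'i else 0)%R.

Definition n_distinct_eigenvalues (n : nat) (M : 'M[algC]_n) (k : nat) : Prop :=
  exists s : seq algC, [/\ uniq s, size s = k &
    forall a : algC, eigenvalue M a <-> a \in s].

Fixpoint ball (T : finType) (e : rel T) (u : T) (k : nat) : {set T} :=
  if k is k'.+1 then
    let B := ball e u k' in B :|: [set y | [exists x in B, e x y]]
  else [set u].

(* Graph distance (least k with v in ball u k); equals #|T| if unreachable. *)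
Definition gdist (T : finType) (e : rel T) (u v : T) : nat :=
  find (fun k => v \in ball e u k) (iota 0 #|T|).

Definition gdiameter (T : finType) (e : rel T) : nat :=
  \max_(u : T) \max_(v : T) gdist e u v.

Definition gconnected (T : finType) (e : rel T) : Prop :=
  forall u v : T, connect e u v.

Arguments und_adj : clear implicits.
Arguments hermAdj : clear implicits.

From HB Require Import structures.
From mathcomp Require Import all_boot all_order all_algebra.
From mathcomp Require Import algC fingroup perm mxtens.
From mathcomp Require Import ring zify.
Set Implicit Arguments. Unset Strict Implicit. Unset Printing Implicit Defensive.
Import Order.TTheory GRing.Theory Num.Theory.
Local Open Scope ring_scope.

(* Blow each vertex of a directed [m]-cycle up into three vertices.  The
   Hermitian adjacency matrix becomes [P *t B + P^T *t B^*], where [P] is the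
   cyclic shift and [B] a rank-one 3x3 matrix with [B^2 = 0] and
   [B B^* B = 6 B]; since [P] is orthogonal this gives [H^3 = 6 H], so the
   spectrum lies in [{0, sqrt 6, -sqrt 6}], and explicit eigenvectors show all
   three values occur.  The underlying graph stays a thickened [m]-cycle, whose
   diameter is about [m / 2]. *)

Section CyclicOrdinals.
Variable m : nat.

Lemma val_ordS (t : 'I_m) : val (ordS t) = if t.+1 == m then 0%N else t.+1.
Proof.
rewrite /=; case: eqP => [->|/eqP t1_neq]; first by rewrite modnn.
by rewrite modn_small // ltn_neqAle t1_neq ltn_ord.
Qed.

Lemma ordS_neq (t : 'I_m) : (1 < m)%N -> ordS t != t.
Proof.
move=> m_gt1; apply/eqP => /(congr1 val); rewrite val_ordS.
by case: eqP => [tS t0|_ /esym/n_Sn //]; rewrite -tS -t0 in m_gt1.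
Qed.

Lemma ordS_asym (t t' : 'I_m) : (2 < m)%N -> (t' == ordS t) && (t == ordS t') = false.
Proof.
move=> m_gt2; apply/negbTE/andP => -[/eqP/(congr1 val) t'S /eqP/(congr1 val) tS].
move: t'S tS; rewrite !val_ordS /=; have := ltn_ord t; have := ltn_ord t'.
by move: (nat_of_ord t) (nat_of_ord t') => a b; do 2 case: eqP; lia.
Qed.

Definition within0 r (t : 'I_m) := (t <= r)%N || (m <= t + r)%N.

Lemma within0_mono r (t : 'I_m) : within0 r t -> within0 r.+1 t.
Proof. by rewrite /within0; case/orP => ?; apply/orP; [left|right]; lia. Qed.

Lemma within0S r (a b : 'I_m) :
  b = ordS a \/ a = ordS b -> within0 r a -> within0 r.+1 b.
Proof.
rewrite /within0 => -[]->; rewrite val_ordS; have := ltn_ord a; have := ltn_ord b;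
  move: (nat_of_ord a) (nat_of_ord b) => a' b'; case: eqP => ? ? ? /orP[] ?; apply/orP; lia.
Qed.

End CyclicOrdinals.

Section TensorProduct.
Variable R : comPzRingType.

Lemma tensmxDr m n p q (A : 'M[R]_(m, n)) (B B' : 'M[R]_(p, q)) :
  A *t (B + B') = A *t B + A *t B'.
Proof. by apply/matrixP=> i j; rewrite !mxE mulrDr. Qed.

Lemma tensmxZr m n p q (A : 'M[R]_(m, n)) (B : 'M[R]_(p, q)) c :
  A *t (c *: B) = c *: (A *t B).
Proof. by apply/matrixP=> i j; rewrite !mxE mulrCA. Qed.

Lemma tens_rowE m n (a : 'rV[R]_m) (b : 'rV[R]_n) i j :
  (a *t b) 0 (mxtens_index (i, j)) = a 0 i * b 0 j.
Proof. by rewrite mxE mxtens_indexK /= !ord1. Qed.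

Lemma tens_row_mul m n p q (a : 'rV[R]_m) (b : 'rV[R]_p)
    (C : 'M[R]_(m, n)) (D : 'M[R]_(p, q)) :
  (a *t b : 'rV_(m * p)) *m (C *t D) = (a *m C) *t (b *m D).
Proof. exact: (@tensmx_mul R 1 m 1 p n q). Qed.

End TensorProduct.

Section CubicEigenvalues.
Variables (F : fieldType) (n : nat) (H : 'M[F]_n).

Lemma eigenvalue_cubic c a :
  H *m H *m H = c *: H -> eigenvalue H a -> a ^+ 3 = c * a.
Proof.
move=> H3 /eigenvalueP [v vH v_neq0].
have vH3 : v *m (H *m H *m H) = a ^+ 3 *: v.
  by rewrite !mulmxA vH -!scalemxAl vH -scalemxAl vH !scalerA -expr2 -exprSr.
apply/eqP; move: vH3; rewrite H3 -scalemxAr vH scalerA => /eqP.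
by rewrite -subr_eq0 -scalerBl scaler_eq0 (negbTE v_neq0) orbF subr_eq0 eq_sym.
Qed.

(* If [y H^2 = s^2 y] then [y H + s y] is an eigenvector for [s], and it is
   nonzero as soon as [y H] vanishes somewhere [y] does not. *)
Lemma eigenvalue_sqr (y : 'rV[F]_n) s i :
  s != 0 -> y *m H *m H = s ^+ 2 *: y -> (y *m H) 0 i = 0 -> y 0 i != 0 ->
  eigenvalue H s.
Proof.
move=> s_neq0 yH2 yHi yi_neq0; apply/eigenvalueP; exists (y *m H + s *: y).
  by rewrite mulmxDl yH2 -scalemxAl scalerDr scalerA -expr2 addrC.
apply/eqP => /matrixP /(_ 0 i); rewrite [LHS]mxE yHi add0r !mxE => /eqP.
by rewrite mulf_eq0 (negbTE s_neq0) (negbTE yi_neq0).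
Qed.

End CubicEigenvalues.

Lemma n_distinct_eigenvalues_cubic n (H : 'M[algC]_n) c :
  c != 0 -> H *m H *m H = c *: H ->
  eigenvalue H 0 -> eigenvalue H (sqrtC c) -> eigenvalue H (- sqrtC c) ->
  n_distinct_eigenvalues H 3.
Proof.
move=> c_neq0 H3 eig0 eig_pos eig_neg; set s := sqrtC c.
have s2 : s ^+ 2 = c by rewrite sqrtCK.
have s_neq0 : s != 0 by rewrite sqrtC_eq0.
have s_neqN : s != - s.
  by rewrite -subr_eq0 opprK -mulr2n mulrn_eq0 negb_or s_neq0.
exists [:: 0; s; - s]; split => // [|a].
  by rewrite /= !inE negb_or !(eq_sym 0) oppr_eq0 s_neq0 s_neqN.
split; last by rewrite !inE => /or3P[] /eqP ->.
move/(eigenvalue_cubic H3) => a3.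
have : a * (a - s) * (a + s) == 0.
  by apply/eqP; transitivity (a ^+ 3 - s ^+ 2 * a); [ring | rewrite s2 a3 mulrC subrr].
by rewrite !mulf_eq0 subr_eq0 addr_eq0 !inE => /orP[/orP[]|] ->; rewrite ?orbT.
Qed.

(* [B3 = 1^T (i, -i, 0)] has rank one and [B3c] is its conjugate transpose. *)
Definition B3 : 'M[algC]_3 :=
  \matrix_(a, b) (if val b == 0%N then 'i else if val b == 1%N then - 'i else 0).
Definition B3c : 'M[algC]_3 :=
  \matrix_(a, b) (if val a == 0%N then - 'i else if val a == 1%N then 'i else 0).

Ltac mx3 := apply/matrixP; do 2![case=> [[|[|[|//]]] ?]];
  rewrite !(mxE, big_ord_recr, big_ord0) /=;
  rewrite ?(mulr0, mul0r, addr0, add0r, mulrDl, mulrDr, mulrN, mulNr, opprK,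
            mulrA, mulCii, mulN1r, mulr1, mul1r, oppr0, opprD);
  try ring.

Lemma B3_sqr : B3 *m B3 = 0. Proof. mx3. Qed.
Lemma B3c_sqr : B3c *m B3c = 0. Proof. mx3. Qed.
Lemma B3_B3c_B3 : B3 *m B3c *m B3 = 6%:R *: B3. Proof. rewrite -mulmxA; mx3. Qed.
Lemma B3c_B3_B3c : B3c *m B3 *m B3c = 6%:R *: B3c. Proof. rewrite -mulmxA; mx3. Qed.

Definition kerB3 : 'rV[algC]_3 := \row_b (if val b == 2%N then - 2%:R else 1).

Lemma kerB3_B3 : kerB3 *m B3 = 0. Proof. mx3. Qed.
Lemma kerB3_B3c : kerB3 *m B3c = 0. Proof. mx3. Qed.

Definition ones3 : 'rV[algC]_3 := const_mx 1.

Lemma ones3_B3_B3c : ones3 *m (B3 *m B3c + B3c *m B3) = 6%:R *: ones3.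
Proof. rewrite mulmxDr !mulmxA; mx3. Qed.

Section CyclicShift.
Variable m : nat.

Definition shift_mx : 'M[algC]_m := perm_mx (perm (@ordS_inj m)).

Lemma shift_mxE t t' : shift_mx t t' = (ordS t == t')%:R.
Proof. by rewrite !mxE permE. Qed.

Lemma mul_shift_mx_tr : shift_mx *m shift_mx^T = 1%:M.
Proof. by rewrite tr_perm_mx -perm_mxM mulgV perm_mx1. Qed.

Lemma mul_tr_shift_mx : shift_mx^T *m shift_mx = 1%:M.
Proof. by rewrite tr_perm_mx -perm_mxM mulVg perm_mx1. Qed.

Lemma shift_mx_diag t : (1 < m)%N -> shift_mx t t = 0.
Proof. by move=> m_gt1; rewrite shift_mxE (negbTE (ordS_neq t m_gt1)). Qed.

Definition layered_herm : 'M[algC]_(m * 3) := shift_mx *t B3 + shift_mx^T *t B3c.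

Lemma layered_herm_sqr :
  layered_herm *m layered_herm = (1%:M : 'M_m) *t (B3 *m B3c + B3c *m B3).
Proof.
rewrite mulmxDl !mulmxDr !tensmx_mul mul_shift_mx_tr mul_tr_shift_mx B3_sqr B3c_sqr.
by rewrite !tensmx0 add0r addr0 tensmxDr.
Qed.

Lemma layered_herm_cube : layered_herm *m layered_herm *m layered_herm = 6%:R *: layered_herm.
Proof.
rewrite layered_herm_sqr mulmxDr !tensmx_mul !mul1mx !mulmxDl -[B3c *m B3 *m B3]mulmxA.
rewrite -[B3 *m B3c *m B3c]mulmxA B3_sqr B3c_sqr !mulmx0 addr0 add0r.
by rewrite B3_B3c_B3 B3c_B3_B3c !tensmxZr scalerDr.
Qed.

End CyclicShift.

Section Spectrum.
Variable k : nat.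
Local Notation m := k.+2.
Local Notation e0 := (delta_mx 0 0 : 'rV[algC]_m).
Local Notation i00 := (mxtens_index (0 : 'I_m, 0 : 'I_3)).

Lemma layered_herm_eigenvalue0 : eigenvalue (layered_herm m) 0.
Proof.
apply/eigenvalueP; exists (e0 *t kerB3).
  by rewrite scale0r /layered_herm mulmxDr !tens_row_mul kerB3_B3 kerB3_B3c !tensmx0 addr0.
apply/eqP => /matrixP /(_ 0 i00); rewrite tens_rowE !mxE /= mulr1.
exact/eqP/oner_neq0.
Qed.

Lemma layered_herm_eigenvalue_sqrt6 s : s ^+ 2 = 6%:R -> eigenvalue (layered_herm m) s.
Proof.
move=> s2; have s_neq0 : s != 0.
  by apply: contra_eq_neq s2 => ->; rewrite expr0n eq_sym pnatr_eq0.
apply: (@eigenvalue_sqr _ _ _ (e0 *t ones3) _ i00 s_neq0).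
- by rewrite -mulmxA layered_herm_sqr tens_row_mul mulmx1 ones3_B3_B3c tensmxZr s2.
- rewrite /layered_herm mulmxDr !tens_row_mul mxE !tens_rowE -!rowE.
  by rewrite ![row _ _ _ _]mxE [_^T _ _]mxE shift_mx_diag // !mul0r addr0.
- by rewrite tens_rowE !mxE mulr1 oner_neq0.
Qed.

Lemma layered_herm_three_eigenvalues : n_distinct_eigenvalues (layered_herm m) 3.
Proof.
apply: n_distinct_eigenvalues_cubic (layered_herm_cube m) layered_herm_eigenvalue0 _ _.
- by rewrite pnatr_eq0.
- by apply: layered_herm_eigenvalue_sqrt6; rewrite sqrtCK.
- by apply: layered_herm_eigenvalue_sqrt6; rewrite sqrrN sqrtCK.
Qed.

End Spectrum.

Definition layer m (x : 'I_(m * 3)) : 'I_m := (mxtens_unindex x).1.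
Definition slot m (x : 'I_(m * 3)) : 'I_3 := (mxtens_unindex x).2.

(* Vertex [(t, s)] has an arc to every [(t + 1, 0)] and receives an arc from
   every [(t + 1, 1)], so that [hermAdj] is [shift_mx *t B3 + shift_mx^T *t B3c]. *)
Definition layer_arc m : rel 'I_(m * 3) := fun x y =>
  (layer y == ordS (layer x)) && (val (slot y) == 0%N) ||
  (layer x == ordS (layer y)) && (val (slot x) == 1%N).

Lemma layer_arc_irr m : (1 < m)%N -> irreflexive (@layer_arc m).
Proof. by move=> m_gt1 x; rewrite /layer_arc eq_sym (negbTE (ordS_neq _ m_gt1)). Qed.

Definition layered_digraph n := Digraph (@layer_arc_irr n.+3 isT).

Lemma hermAdj_layered n : hermAdj (layered_digraph n) = layered_herm n.+3.
Proof.
apply/matrixP => x y.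
case/(@mxtens_indexP n.+3 3): x => t s; case/(@mxtens_indexP n.+3 3): y => t' s'.
rewrite /hermAdj /layered_herm mxE [in RHS]mxE !tensmxE /= /layer_arc /layer /slot.
rewrite !mxtens_indexK /= [_^T _ _]mxE !shift_mxE [ordS t == t']eq_sym [ordS t' == t]eq_sym.
have := ordS_asym t t' (isT : (2 < n.+3)%N).
case: (t' == ordS t); case: (t == ordS t') => // _;
case: s => [[|[|[|//]]] ?]; case: s' => [[|[|[|//]]] ?]; rewrite !mxE /=;
by rewrite ?(mulr0, mul0r, addr0, add0r, mulr1, mul1r).
Qed.

Lemma gdist_ge (T : finType) (e : rel T) u v d :
  (d <= #|T|)%N -> (forall r, v \in ball e u r -> d <= r)%N -> (d <= gdist e u v)%N.
Proof.
move=> d_le_card ball_ge; rewrite /gdist; set s := iota 0 #|T|.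
have [found|] := ltnP (find (fun r => v \in ball e u r) s) (size s).
  apply: ball_ge; have := nth_find 0 (a := fun r => v \in ball e u r) (s := s).
  rewrite has_find => /(_ found); rewrite nth_iota ?add0n //.
  by rewrite size_iota in found.
by apply: leq_trans; rewrite size_iota.
Qed.

Lemma gdist_le_diameter (T : finType) (e : rel T) u v : (gdist e u v <= gdiameter e)%N.
Proof. exact: leq_trans (leq_bigmax v) (leq_bigmax u). Qed.

Section LayeredGraph.
Variable n : nat.
Local Notation m := n.+3.
Local Notation adj := (und_adj (layered_digraph n)).
Local Notation vtx t s := (mxtens_index (t, s) : 'I_(m * 3)).

Lemma adj_sym : symmetric adj.
Proof. by move=> x y; rewrite /und_adj orbC. Qed.

Lemma adj_succ t s : adj (vtx t s) (vtx (ordS t) 0).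
Proof. by rewrite /und_adj /= /layer_arc /layer /slot !mxtens_indexK /= eqxx. Qed.

Lemma connect_layer0 (t : 'I_m) : connect adj (vtx 0 0) (vtx t 0).
Proof.
suff: forall k (k_lt : (k < m)%N), connect adj (vtx 0 0) (vtx (Ordinal k_lt) 0).
  by case: t => k k_lt; apply.
elim=> [|k IHk] k_lt; first by rewrite (_ : Ordinal k_lt = 0) //; apply: val_inj.
apply: connect_trans (IHk (ltnW k_lt)) (connect1 _).
suff <- : ordS (Ordinal (ltnW k_lt)) = Ordinal k_lt by apply: adj_succ.
by apply: val_inj; rewrite val_ordS /=; case: eqP => // k_eq; rewrite k_eq ltnn in k_lt.
Qed.

Lemma connect_vtx00 z : connect adj (vtx 0 0) z.
Proof.
case/(@mxtens_indexP m 3): z => t s.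
apply: connect_trans (connect_layer0 (ordS t)) _.
by rewrite (sym_connect_sym adj_sym); apply/connect1/adj_succ.
Qed.

Lemma layered_connected : gconnected adj.
Proof.
move=> u v; apply: connect_trans (connect_vtx00 v).
by rewrite (sym_connect_sym adj_sym) connect_vtx00.
Qed.

Lemma adj_layer x z : adj x z -> layer z = ordS (layer x) \/ layer x = ordS (layer z).
Proof. by rewrite /und_adj /= /layer_arc => /orP[]/orP[]/andP[/eqP-> _]; auto. Qed.

Lemma ball_within0 r z : z \in ball adj (vtx 0 0) r -> within0 r (layer z).
Proof.
elim: r z => [|r IHr] z.
  by rewrite inE => /eqP ->; rewrite /layer mxtens_indexK.
rewrite !inE => /orP[/IHr|]; first by apply: within0_mono.
by case/existsP => x /andP[/IHr x_within /adj_layer step]; apply: within0S step x_within.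
Qed.

End LayeredGraph.

Lemma layered_diameter j : (j < gdiameter (und_adj (layered_digraph j.*2)))%N.
Proof.
set v := mxtens_index (inord j.+1 : 'I_(j.*2.+3), 0 : 'I_3).
apply: leq_trans (gdist_le_diameter _ (mxtens_index (0, 0)) v).
have j1 : (j.+1 < j.*2.+3)%N by rewrite -addnn; lia.
apply: gdist_ge => [|r /ball_within0]; first by rewrite card_ord -addnn; lia.
by rewrite /within0 /layer mxtens_indexK /= inordK // -addnn => /orP[]; lia.
Qed.

Theorem corollary7p3 :
  exists X : nat -> digraph,
    (forall j, gconnected (und_adj (X j))) /\
    (forall M : nat, exists J : nat, forall j, (J <= j)%N ->
        (M <= gdiameter (und_adj (X j)))%N) /\
    (forall j, n_distinct_eigenvalues (hermAdj (X j)) 3).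
Proof.
exists (fun j => layered_digraph j.*2); split => [j|]; first exact: layered_connected.
split => [M|j]; last by rewrite hermAdj_layered; apply: layered_herm_three_eigenvalues.
by exists M => j M_le_j; apply: leq_trans M_le_j (ltnW (layered_diameter j)).
Qed.
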